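(* Let $\gamma\ge1$ and let $\mathcal{C}\in\mathbb{C}^{2\times2\times\cdots\times2}$ be a tensor of order $2\gamma$ that is Hermitian and $\gamma$-semisymmetric. For $\theta,\phi\in\mathbb{R}$ let $x=(\cos\theta,\ \sin\theta\,e^{-\mathrm{i}\phi})^T$ and $y=(-\sin\theta\,e^{\mathrm{i}\phi},\ \cos\theta)^T$. Then there exist real symmetric matrices $M^{(\alpha,\beta)}\in\mathbb{R}^{3\times3}$, $1\le\alpha,\beta\le\gamma$, determined by $\mathcal{C}$, and real constants $c_x,c_y$ (independent of $\theta,\phi$) such that for all $\theta,\phi\in\mathbb{R}$ $$\mathcal{C}[x]=\sum_{\alpha=1}^{\gamma}\sum_{\beta=1}^{\gamma}z_{\alpha,\beta}^TM^{(\alpha,\beta)}z_{\alpha,\beta}+c_x,\qquad \mathcal{C}[y]=\sum_{\alpha=1}^{\gamma}\sum_{\beta=1}^{\gamma}(-1)^{\alpha}z_{\alpha,\beta}^TM^{(\alpha,\beta)}z_{\alpha,\beta}+c_y,$$ where $z_{\alpha,\beta}=z_{\alpha,\beta}(\theta,\phi)=(\cos\alpha\theta,\,-\sin\alpha\theta\cos\beta\phi,\,-\sin\alpha\theta\sin\beta\phi)^T$.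
   Context: For a vector $a\in\mathbb{C}^2$, $\mathcal{C}[a]=\sum_{i_1,\dots,i_{2\gamma}\in\{1,2\}}\mathcal{C}_{i_1\cdots i_{2\gamma}}\,\overline{a_{i_1}}\cdots\overline{a_{i_\gamma}}\,a_{i_{\gamma+1}}\cdots a_{i_{2\gamma}}$ (i.e. $\mathcal{C}$ contracted with $a^H$ in modes $1,\dots,\gamma$ and with $a^T$ in modes $\gamma+1,\dots,2\gamma$). $\mathcal{C}$ is Hermitian if $\mathcal{C}_{i_1\cdots i_\gamma i_{\gamma+1}\cdots i_{2\gamma}}=\overline{\mathcal{C}_{i_{\gamma+1}\cdots i_{2\gamma}i_1\cdots i_\gamma}}$ for all indices; it is $\gamma$-semisymmetric if its entries are invariant under any permutation of the first $\gamma$ indices and under any permutation of the last $\gamma$ indices. *)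

From HB Require Import structures.
From mathcomp Require Import all_boot all_order all_algebra all_fingroup.
From mathcomp Require Import complex.
From mathcomp Require Import reals trigo.
Set Implicit Arguments. Unset Strict Implicit. Unset Printing Implicit Defensive.
Import Order.TTheory GRing.Theory Num.Theory.
Local Open Scope ring_scope.
Local Open Scope complex_scope.

(* A tensor of order 2*g over C^2 (indices in {1,2}, here 'I_2 = {0,1}):
   a function from multi-indices (i_1,...,i_{2g}) : 'I_(g+g) -> 'I_2
   to complex numbers.  The first g modes are the positions lshift g j,
   the last g modes are the positions rshift g j (j : 'I_g). *)
Definition tensor (R : rcfType) (g : nat) := {ffun 'I_(g + g) -> 'I_2} -> R[i].

Definition swap_halves (g : nat) (k : 'I_(g + g)) : 'I_(g + g) :=
  match split k with
  | inl j => rshift g j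
  | inr j => lshift g j
  end.

Definition perm_halves (g : nat) (s t : 'S_g) (k : 'I_(g + g)) : 'I_(g + g) :=
  match split k with
  | inl j => lshift g (s j)
  | inr j => rshift g (t j)
  end.

Definition hermitian_tensor (R : rcfType) (g : nat) (C : tensor R g) : Prop :=
  forall idx : {ffun 'I_(g + g) -> 'I_2},
    C idx = (C [ffun k => idx (swap_halves k)])^*.

Definition semisymmetric_tensor (R : rcfType) (g : nat) (C : tensor R g) : Prop :=
  forall (s t : 'S_g) (idx : {ffun 'I_(g + g) -> 'I_2}),
    C [ffun k => idx (perm_halves s t k)] = C idx.

Definition tensor_eval (R : rcfType) (g : nat) (C : tensor R g) (a : 'I_2 -> R[i]) : R[i] :=
  \sum_(idx : {ffun 'I_(g + g) -> 'I_2})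
     C idx * (\prod_(j < g) (a (idx (lshift g j)))^*)
           * (\prod_(j < g) a (idx (rshift g j))).

Definition xvec (R : realType) (th ph : R) : 'I_2 -> R[i] :=
  fun k => if k == ord0 then (cos th)%:C
           else (sin th)%:C * (cos ph -i* sin ph).

Definition yvec (R : realType) (th ph : R) : 'I_2 -> R[i] :=
  fun k => if k == ord0 then - (sin th)%:C * (cos ph +i* sin ph)
           else (cos th)%:C.

Definition zvec (R : realType) (a b : nat) (th ph : R) : 'cV[R]_3 :=
  \col_(k < 3) (if k == 0%N :> nat then cos (a%:R * th)
                else if k == 1%N :> nat then - sin (a%:R * th) * cos (b%:R * ph)
                else - sin (a%:R * th) * sin (b%:R * ph)).

Definition qform (R : realType) (M : 'M[R]_3) (z : 'cV[R]_3) : R :=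
  ((z^T *m M *m z) ord0 ord0).

From HB Require Import structures.
From mathcomp Require Import all_boot all_order all_algebra all_fingroup.
From mathcomp Require Import complex.
From mathcomp Require Import boolp reals trigo.
From mathcomp Require Import ring zify.
Set Implicit Arguments. Unset Strict Implicit. Unset Printing Implicit Defensive.
Import Order.TTheory GRing.Theory Num.Theory.
Local Open Scope ring_scope.
Local Open Scope complex_scope.

(* Hermitian symmetry makes C[x] real.  Expanding it monomial by monomial, Re C[x] is a sum
   of terms cos^u θ sin^v θ (A cos kφ + B sin kφ) with u + v = 2γ, k <= γ and k = v mod 2.
   Reducing the powers of cos θ and sin θ to harmonics in 2θ, every such term is a linear
   combination of a constant and of products z_i z_j of coordinates of the z_{α,β}, i.e. of
   quadratic forms z^T M z with M symmetric; when k >= 2 is even one first subtracts the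
   vanishing value at θ = 0, which trades the harmonics cos 2jθ for sin² jθ.
   For y, y(θ,φ) = e^{iφ} x(θ + π/2, φ) and C[.] is invariant under unimodular scaling.
   Shifting θ by π/2 multiplies z_{α,β}^T M z_{α,β} by (-1)^α up to a term depending on φ
   only; the sum of these terms is constant, as seen at θ = 0 where y does not depend on φ. *)

Section FunctionSpan.
Variable R : pzRingType.

Inductive fspan (T : Type) (S : (T -> R) -> Prop) : (T -> R) -> Prop :=
| fspan0 : fspan S (fun=> 0)
| fspanD h a f : S h -> fspan S f -> fspan S (fun x => a * h x + f x).
Arguments fspan0 {T S}.

Lemma fspan_ext T (S : (T -> R) -> Prop) f1 f2 :
  fspan S f1 -> f1 =1 f2 -> fspan S f2.
Proof. by move=> + /funext <-. Qed.

Lemma fspan_gen T (S : (T -> R) -> Prop) h : S h -> fspan S h.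
Proof.
by move=> Sh; apply: (fspan_ext (fspanD 1 Sh fspan0)) => x; rewrite mul1r addr0.
Qed.

Lemma fspan_add T (S : (T -> R) -> Prop) f1 f2 :
  fspan S f1 -> fspan S f2 -> fspan S (fun x => f1 x + f2 x).
Proof.
elim=> [|h a f Sh _ IH] S2; first by apply: (fspan_ext S2) => x; rewrite add0r.
by apply: (fspan_ext (fspanD a Sh (IH S2))) => x; rewrite addrA.
Qed.

Lemma fspan_scale T (S : (T -> R) -> Prop) a f :
  fspan S f -> fspan S (fun x => a * f x).
Proof.
elim=> [|h b f' Sh _ IH]; first by apply: (fspan_ext fspan0) => x; rewrite mulr0.
by apply: (fspan_ext (fspanD (a * b) Sh IH)) => x; rewrite mulrDr mulrA.
Qed.

Lemma fspan_sum T (S : (T -> R) -> Prop) (I : Type) (r : seq I) F :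
  (forall i : I, fspan S (F i)) -> fspan S (fun x => \sum_(i <- r) F i x).
Proof.
move=> SF; elim: r => [|i r IH].
  by apply: (fspan_ext fspan0) => x; rewrite big_nil.
by apply: (fspan_ext (fspan_add (SF i) IH)) => x; rewrite big_cons.
Qed.

Definition linear_fun T U (Phi : (T -> R) -> U -> R) :=
  Phi (fun=> 0) =1 (fun=> 0) /\
  forall a h f, Phi (fun x => a * h x + f x) =1 (fun y => a * Phi h y + Phi f y).

Lemma fspan_linear_image T U (Phi : (T -> R) -> U -> R) S S' f :
  linear_fun Phi -> (forall h, S h -> fspan S' (Phi h)) ->
  fspan S f -> fspan S' (Phi f).
Proof.
move=> [Phi0 PhiD] PhiS; elim=> [|h a f' Sh _ IH].
  by apply: (fspan_ext fspan0) => y; rewrite Phi0.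
by apply: (fspan_ext (fspan_add (fspan_scale a (PhiS h Sh)) IH)) => y; rewrite PhiD.
Qed.

Lemma fspan_tensor T U (S : (T -> R) -> Prop) (S' : (T * U -> R) -> Prop) w f :
  (forall h, S h -> fspan S' (fun p => h p.1 * w p.2)) ->
  fspan S f -> fspan S' (fun p => f p.1 * w p.2).
Proof.
apply: (fspan_linear_image (Phi := fun f p => f p.1 * w p.2)).
by split=> [p|a h f' p]; rewrite /= ?mul0r // mulrDl mulrA.
Qed.

End FunctionSpan.
Arguments fspan0 {R T S}.

Section Harmonics.
Variable R : realType.

Definition harmonic (b : bool) (j : nat) (t : R) : R :=
  (if b then sin else cos) ((j%:R * t) *+ 2).

Definition harmonics (b : bool) (n : nat) (h : R -> R) :=
  exists2 j, (j <= n)%N & h = harmonic b j.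

Lemma trig_mul_cos (b : bool) (x y : R) :
  (if b then sin else cos) x * cos y =
  2^-1 * (if b then sin else cos) (x + y) + 2^-1 * (if b then sin else cos) (x - y).
Proof. by case: b; rewrite /= ?(sinD, cosD, sinN, cosN); field; rewrite ?pnatr_eq0. Qed.

Lemma harmonics_mul_cos2 b n h : harmonics b n h ->
  fspan (harmonics b n.+1) (fun t => h t * cos (t *+ 2)).
Proof.
have hS j t : ((j.+1%:R * t) *+ 2 = (j%:R * t) *+ 2 + t *+ 2 :> R).
  by rewrite -natr1 mulrDl mul1r mulrnDl.
case=> [[|j] le_jn ->].
  case: b; rewrite /harmonic.
    by apply: (fspan_ext fspan0) => t; rewrite mul0r mul0rn sin0 mul0r.
  apply: fspan_gen; exists 1%N => //; apply: funext => t.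
  by rewrite mul0r mul0rn cos0 mul1r /harmonic mul1r.
have gen k : (k <= j.+2)%N -> fspan (harmonics b n.+1) (harmonic b k).
  by move=> le_kj; apply: fspan_gen; exists k => //; lia.
apply: (fspan_ext (fspan_add (fspan_scale 2^-1 (gen j.+2 (leqnn _)))
                             (fspan_scale 2^-1 (gen j (leqW (leqnSn j)))))) => t.
by rewrite /harmonic trig_mul_cos !hS addrK.
Qed.

Lemma harmonics_mul_affine_cos2 b n a c f : fspan (harmonics b n) f ->
  fspan (harmonics b n.+1) (fun t => (a + c * cos (t *+ 2)) * f t).
Proof.
apply: (fspan_linear_image (Phi := fun f t => (a + c * cos (t *+ 2)) * f t)).
  by split=> [t|d h f' t]; ring.
move=> h [j le_jn ->].
apply: (fspan_ext (fspan_add (fspan_scale a _)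
                    (fspan_scale c (harmonics_mul_cos2 (ex_intro2 _ _ j le_jn erefl))))).
  by apply: fspan_gen; exists j => //; apply: leqW.
by move=> t; ring.
Qed.

Lemma cos_sqr (t : R) : cos t ^+ 2 = 2^-1 + 2^-1 * cos (t *+ 2).
Proof. by rewrite cos_mulr2n; field; rewrite ?pnatr_eq0. Qed.

Lemma sin_sqr (t : R) : sin t ^+ 2 = 2^-1 - 2^-1 * cos (t *+ 2).
Proof. by rewrite cos_mulr2n sin2cos2; field; rewrite ?pnatr_eq0. Qed.

Lemma cos_sin_monomial_harmonics n u v : (u + v = n.*2)%N ->
  fspan (harmonics (odd v) n) (fun t => cos t ^+ u * sin t ^+ v).
Proof.
elim: n u v => [|n IH] u v uv.
  have [-> ->] : u = 0%N /\ v = 0%N by lia.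
  apply: fspan_gen; exists 0%N => //; apply: funext => t.
  by rewrite /harmonic /= mul0r mul0rn cos0 !expr0 mulr1.
case: v uv => [|[|v]] uv; last first.
  rewrite /= negbK.
  apply: (fspan_ext (harmonics_mul_affine_cos2 2^-1 (- 2^-1) (IH u v _))) => [|t].
    lia.
  by rewrite (exprD (sin t) 2 v) sin_sqr; ring.
all: case: u uv => [|[|u]] uv; try lia.
- have -> : n = 0%N by lia.
  apply: (fspan_ext (fspan_scale 2^-1 (fspan_gen (ex_intro2 _ _ 1%N _ erefl)))) => // t.
  by rewrite /harmonic /= mul1r sin_mulr2n; field; rewrite ?pnatr_eq0.
- apply: (fspan_ext (harmonics_mul_affine_cos2 2^-1 2^-1 (IH u 1%N _))) => [|t].
    lia.
  by rewrite (exprD (cos t) 2 u) cos_sqr; ring.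
- apply: (fspan_ext (harmonics_mul_affine_cos2 2^-1 2^-1 (IH u 0%N _))) => [|t].
    lia.
  by rewrite (exprD (cos t) 2 u) cos_sqr; ring.
Qed.

Definition sin_squares (n : nat) (h : R -> R) :=
  exists2 j, (j <= n)%N & h = fun t => sin (j%:R * t) ^+ 2.

Lemma cos_harmonics_sub_at0 n f : fspan (harmonics false n) f ->
  fspan (sin_squares n) (fun t => f t - f 0).
Proof.
apply: (fspan_linear_image (Phi := fun f t => f t - f 0)).
  by split=> [t|d h f' t]; ring.
move=> h [j le_jn ->].
apply: (fspan_ext (fspan_scale (-2) (fspan_gen (ex_intro2 _ _ j le_jn erefl)))) => t.
by rewrite /harmonic mulr0 mul0rn cos0 cos_mulr2n sin2cos2; ring.
Qed.

End Harmonics.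

Section QuadraticForms.
Variable R : realType.
Implicit Types (M N : 'M[R]_3) (z : 'cV[R]_3).

Lemma qformD M N z : qform (M + N) z = qform M z + qform N z.
Proof. by rewrite /qform mulmxDr mulmxDl mxE. Qed.

Lemma qformZ a M z : qform (a *: M) z = a * qform M z.
Proof. by rewrite /qform -scalemxAr -scalemxAl mxE. Qed.

Lemma qform0 z : qform 0 z = 0.
Proof. by rewrite -(scale0r 0) qformZ mul0r. Qed.

Lemma qform_delta (i j : 'I_3) z : qform (delta_mx i j) z = z i 0 * z j 0.
Proof.
rewrite /qform mxE (bigD1 j) //= big1 ?addr0 => [|k /negbTE nkj].
  rewrite mxE (bigD1 i) //= big1 ?addr0 => [|k /negbTE nki]; last first.
    by rewrite !mxE nki mulr0.
  by rewrite !mxE !eqxx mulr1 mulrC.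
rewrite mxE big1 ?mul0r // => l _.
by rewrite !mxE nkj andbF mulr0.
Qed.

Definition sym_delta (i j : 'I_3) : 'M[R]_3 := 2^-1 *: (delta_mx i j + delta_mx j i).

Lemma sym_deltaT i j : (sym_delta i j)^T = sym_delta i j.
Proof. by rewrite /sym_delta linearZ linearD /= !trmx_delta addrC. Qed.

Lemma qform_sym_delta i j z : qform (sym_delta i j) z = z i 0 * z j 0.
Proof.
by rewrite qformZ qformD !qform_delta; field; rewrite ?pnatr_eq0.
Qed.

End QuadraticForms.
Arguments sym_delta {R}.

Section ZvecBasis.
Variable R : realType.

Definition zdir (b : nat) (ph : R) : 'cV[R]_3 :=
  \col_(k < 3) (if k == 0%N :> nat then 0
                else if k == 1%N :> nat then - cos (b%:R * ph) else - sin (b%:R * ph)).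

Lemma zvecE a b th ph :
  zvec a b th ph = cos (a%:R * th) *: delta_mx 0 0 + sin (a%:R * th) *: zdir b ph.
Proof.
apply/matrixP => i j; rewrite !mxE (ord1 j).
by case: i => -[|[|[|//]]] lt_i /=; ring.
Qed.

Lemma zvec_a0 b (th ph : R) : zvec 0 b th ph = delta_mx 0 0.
Proof. by rewrite zvecE mul0r cos0 sin0 scale1r scale0r addr0. Qed.

Lemma zvec_th0 a b (ph : R) : zvec a b 0 ph = delta_mx 0 0.
Proof. by rewrite zvecE mulr0 cos0 sin0 scale1r scale0r addr0. Qed.

End ZvecBasis.

Section ZvecProducts.
Variables (R : realType) (g : nat).
Hypothesis g_gt0 : (0 < g)%N.

(* The index a = 0 is allowed: zvec 0 b is the constant e_0, so these
   products supply the constant functions. *)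
Definition zvec_products (F : R * R -> R) :=
  exists a b (i j : 'I_3), [/\ (a <= g)%N, (1 <= b <= g)%N &
    F = fun p => zvec a b p.1 p.2 i 0 * zvec a b p.1 p.2 j 0].

Local Notation zspan := (fspan zvec_products).

Lemma zspan_prod a b (i j : 'I_3) : (a <= g)%N -> (1 <= b <= g)%N ->
  zspan (fun p => zvec a b p.1 p.2 i 0 * zvec a b p.1 p.2 j 0).
Proof. by move=> le_ag bg; apply: fspan_gen; exists a, b, i, j. Qed.

Let z0 : 'I_3 := @Ordinal 3 0 isT.
Let z1 : 'I_3 := @Ordinal 3 1 isT.
Let z2 : 'I_3 := @Ordinal 3 2 isT.

Lemma zspan_cos_harmonic j : (j <= g)%N -> zspan (fun p => harmonic false j p.1).
Proof.
move=> le_jg; have bg : (1 <= 1 <= g)%N by rewrite leqnn.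
apply: (fspan_ext (fspan_add (fspan_scale 2 (zspan_prod z0 z0 le_jg bg))
                             (fspan_scale (-1) (zspan_prod z0 z0 (leq0n g) bg)))) => p.
by rewrite /harmonic /zvec !mxE /= cos_mulr2n mul0r cos0; ring.
Qed.

Lemma zspan_sin_harmonic j k A B : (j <= g)%N -> (1 <= k <= g)%N ->
  zspan (fun p => harmonic true j p.1 * (A * cos (k%:R * p.2) + B * sin (k%:R * p.2))).
Proof.
move=> le_jg kg.
apply: (fspan_ext (fspan_add (fspan_scale (-2 * A) (zspan_prod z0 z1 le_jg kg))
                             (fspan_scale (-2 * B) (zspan_prod z0 z2 le_jg kg)))) => p.
by rewrite /harmonic /zvec !mxE /= sin_mulr2n; ring.
Qed.

Lemma zspan_sin_square j b A B : (j <= g)%N -> (1 <= b <= g)%N ->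
  zspan (fun p => sin (j%:R * p.1) ^+ 2 *
                  (A * cos ((b%:R * p.2) *+ 2) + B * sin ((b%:R * p.2) *+ 2))).
Proof.
move=> le_jg bg.
apply: (fspan_ext (fspan_add (fspan_scale A (zspan_prod z1 z1 le_jg bg))
         (fspan_add (fspan_scale (- A) (zspan_prod z2 z2 le_jg bg))
                    (fspan_scale (2 * B) (zspan_prod z1 z2 le_jg bg))))) => p.
by rewrite /zvec !mxE /= !mulr2n sinD cosD; ring.
Qed.

Lemma zspan_trig_monomial u v k A B :
  (u + v = g.*2)%N -> (k <= g)%N -> (k <= v)%N -> odd k = odd v ->
  zspan (fun p => cos p.1 ^+ u * sin p.1 ^+ v *
                  (A * cos (k%:R * p.2) + B * sin (k%:R * p.2))).
Proof.
move=> uv le_kg le_kv odd_kv.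
have f_span := cos_sin_monomial_harmonics R uv.
set f := fun t => _ in f_span.
pose w ph := A * cos (k%:R * ph) + B * sin (k%:R * ph).
case/boolP: (odd v) f_span => [odd_v | even_v] f_span.
  apply: (fspan_tensor (w := w) _ f_span) => _ [j le_jg ->].
  have k_gt0 : (0 < k)%N by case: k odd_kv {le_kv le_kg w} => //; rewrite odd_v.
  by apply: zspan_sin_harmonic; rewrite ?k_gt0.
case: k odd_kv le_kg le_kv {w} => [_ _ _ | k odd_kv le_kg le_kv].
  apply: (fspan_ext (fspan_tensor (w := fun=> A) _ f_span)) => [_ [j le_jg ->] | p].
    by apply: (fspan_ext (fspan_scale A (zspan_cos_harmonic le_jg))) => p; rewrite mulrC.
  by rewrite /f /= mul0r cos0 sin0; ring.
have [b kb] : exists b, k.+1 = b.*2.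
  by exists k.+1./2; rewrite even_halfK // odd_kv.
(* cos 2jθ cos kφ is not a combination of z-products, but f vanishes at 0 and
   f - f 0 is a combination of the sin² jθ. *)
have f0 : f 0 = 0 by rewrite /f sin0 expr0n gtn_eqF ?mulr0 //; lia.
pose w ph := A * cos ((b%:R * ph) *+ 2) + B * sin ((b%:R * ph) *+ 2).
apply: (fspan_ext (fspan_tensor (w := w) _ (cos_harmonics_sub_at0 f_span))).
  by move=> _ [j le_jg ->]; apply: zspan_sin_square; lia.
move=> p.
by rewrite /= f0 subr0 /f /w kb -muln2 natrM mulr_natr (mulrnAl b%:R).
Qed.

Lemma zspan_trig_pair p q A B : (p <= g)%N -> (q <= g)%N ->
  zspan (fun pt => cos pt.1 ^+ ((g - p) + (g - q)) * sin pt.1 ^+ (p + q) *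
           (A * cos ((p%:R - q%:R) * pt.2) + B * sin ((p%:R - q%:R) * pt.2))).
Proof.
wlog le_qp : p q B / (q <= p)%N.
  move=> hwlog le_pg le_qg; case: (leqP q p) => [le_qp | /ltnW le_pq].
    exact: hwlog.
  apply: (fspan_ext (hwlog q p (- B) le_pq le_qg le_pg)) => pt.
  by rewrite addnC (addnC q) -opprB mulNr cosN sinN; ring.
move=> le_pg le_qg.
have odd_pq : odd (p - q) = odd (p + q) by rewrite oddB // oddD.
apply: (fspan_ext (zspan_trig_monomial (u := (g - p) + (g - q)) A B _ _ _ odd_pq)).
- lia.
- lia.
- lia.
- by move=> pt; rewrite /= natrB.
Qed.

End ZvecProducts.

Lemma sum_nat_indicator (R : pzSemiRingType) m n k (F : nat -> R) : (m <= k < n)%N ->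
  \sum_(m <= i < n) (i == k)%:R * F i = F k.
Proof.
move=> kmn; rewrite (bigD1_seq k) ?mem_index_iota ?iota_uniq //= eqxx mul1r.
by rewrite big1 ?addr0 // => i /negbTE ->; rewrite mul0r.
Qed.

Section ZQuadSums.
Variables (R : realType) (g : nat).

Definition zquad_sum (M : nat -> nat -> 'M[R]_3) (th ph : R) :=
  \sum_(1 <= a < g.+1) \sum_(1 <= b < g.+1) qform (M a b) (zvec a b th ph).

Lemma zquad_sum0 th ph : zquad_sum (fun _ _ => 0) th ph = 0.
Proof. by rewrite /zquad_sum big1 // => a _; rewrite big1 // => b _; rewrite qform0. Qed.

Lemma zquad_sum_add_at M N a0 b0 th ph : (1 <= a0 <= g)%N -> (1 <= b0 <= g)%N ->
  zquad_sum (fun a b => M a b + ((a == a0) && (b == b0))%:R *: N) th ph =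
  zquad_sum M th ph + qform N (zvec a0 b0 th ph).
Proof.
move=> a0g b0g; rewrite /zquad_sum.
under eq_bigr => a _ do under eq_bigr => b _ do rewrite qformD qformZ -mulnb natrM -mulrA.
under eq_bigr => a _ do rewrite big_split -mulr_sumr /=.
by rewrite big_split /= sum_nat_indicator // sum_nat_indicator.
Qed.

Lemma zspan_zquad_sum F : fspan (zvec_products g) F ->
  exists (M : nat -> nat -> 'M[R]_3) (c : R),
    (forall a b, (M a b)^T = M a b) /\
    forall th ph, F (th, ph) = zquad_sum M th ph + c.
Proof.
elim=> [|_ x F' [a0 [b0 [i [j [le_a0g b0g ->]]]]] _ [M [c [symM FE]]]].
  exists (fun _ _ => 0), 0; split=> [a b|th ph]; first by rewrite trmx0.
  by rewrite zquad_sum0 addr0.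
case: a0 le_a0g => [_ | a0 a0g].
  exists M, (x * (zvec 0 b0 0 0 i 0 * zvec 0 b0 0 0 j 0) + c); split=> // th ph.
  by rewrite FE /= !zvec_a0 addrCA.
exists (fun a b => M a b + ((a == a0.+1) && (b == b0))%:R *: (x *: sym_delta i j)), c.
split=> [a b | th ph].
  by rewrite linearD /= linearZ /= linearZ /= sym_deltaT symM.
by rewrite zquad_sum_add_at // qformZ qform_sym_delta FE /=; ring.
Qed.

End ZQuadSums.

(* [tensor_eval] conjugates with the ring_scope [^*] (Num.conj), hence the %R below; the
   complex_scope [^*] (conjc) is convertible to it but does not match it in rewrites. *)
Section Cis.
Variable R : realType.
Implicit Types (s t r : R) (z : R[i]).

Definition cis t : R[i] := cos t +i* sin t.

Lemma cis0 : cis 0 = 1.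
Proof. by rewrite /cis cos0 sin0. Qed.

Lemma cisD s t : cis (s + t) = cis s * cis t.
Proof. by apply/eqP; rewrite eq_complex /= cosD sinD !eqxx addrC eqxx. Qed.

Lemma cis_natmul n t : cis (n%:R * t) = cis t ^+ n.
Proof.
elim: n => [|n IH]; first by rewrite mul0r cis0.
by rewrite -natr1 mulrDl mul1r cisD IH exprSr.
Qed.

Lemma conj_cis t : ((cis t)^*)%R = cis (- t).
Proof. by rewrite /cis cosN sinN. Qed.

Lemma conj_cis_mul t : ((cis t)^*)%R * cis t = 1.
Proof. by rewrite conj_cis -cisD addNr cis0. Qed.

Lemma conj_realC r : ((r%:C)^*)%R = r%:C.
Proof. by apply/eqP; rewrite eq_complex /= oppr0 !eqxx. Qed.

Lemma Re_realC_mul r z : complex.Re (r%:C * z) = r * complex.Re z.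
Proof. by case: z => a b /=; ring. Qed.

Lemma Re_mul_cis z t :
  complex.Re (z * cis t) = complex.Re z * cos t - complex.Im z * sin t.
Proof. by case: z. Qed.

Lemma conj_fixed_real z : (z^*)%R = z -> z = (complex.Re z)%:C.
Proof.
by case: z => a b /= [] /eqP; rewrite eq_sym -addr_eq0 -mulr2n mulrn_eq0 /= => /eqP ->.
Qed.

End Cis.

Definition nones (g : nat) (s : 'I_g -> 'I_2) : nat := #|[pred j | s j != ord0]|.

Lemma nones_le g (s : 'I_g -> 'I_2) : (nones s <= g)%N.
Proof. by rewrite -[X in (_ <= X)%N]card_ord max_card. Qed.

Lemma prod_ord2 (S : comPzSemiRingType) g (s : 'I_g -> 'I_2) (f : 'I_2 -> S) :
  \prod_(j < g) f (s j) = f ord0 ^+ (g - nones s) * f ord_max ^+ nones s.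
Proof.
rewrite (bigID (fun j => s j == ord0)) /=.
rewrite (eq_bigr (fun=> f ord0)) => [|j /eqP ->//].
rewrite [X in _ * X](eq_bigr (fun=> f ord_max)) => [|j]; last first.
  by case: (s j) => -[|[|//]] //= lt_s _; congr f; apply: val_inj.
rewrite !prodr_const; congr (_ ^+ _ * _).
apply: (canRL (addnK (nones s))).
by rewrite -[RHS](card_ord g) -(cardC [pred j | s j == ord0]).
Qed.

Section TensorEval.
Variables (R : realType) (g : nat) (C : tensor R g).

Lemma swap_halves_lshift (j : 'I_g) : swap_halves (lshift g j) = rshift g j.
Proof. by rewrite /swap_halves -[lshift g j]/(unsplit (inl _ j)) unsplitK. Qed.

Lemma swap_halves_rshift (j : 'I_g) : swap_halves (rshift g j) = lshift g j.
Proof. by rewrite /swap_halves -[rshift g j]/(unsplit (inr _ j)) unsplitK. Qed.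

Definition swap_index (idx : {ffun 'I_(g + g) -> 'I_2}) : {ffun 'I_(g + g) -> 'I_2} :=
  [ffun k => idx (swap_halves k)].

Lemma swap_indexK : involutive swap_index.
Proof.
move=> idx; apply/ffunP => k; rewrite !ffunE -[k]splitK.
by case: (split k) => j /=; rewrite ?(swap_halves_lshift, swap_halves_rshift).
Qed.

Lemma hermitian_tensor_eval_real a : hermitian_tensor C ->
  tensor_eval C a = (complex.Re (tensor_eval C a))%:C.
Proof.
move=> hermC; apply: conj_fixed_real.
rewrite /tensor_eval rmorph_sum (reindex_inj (inv_inj swap_indexK)) /=.
apply: eq_bigr => idx _; rewrite !rmorphM !rmorph_prod /=.
have -> : ((C (swap_index idx))^*)%R = C idx by rewrite [RHS]hermC.
under eq_bigr => j _ do rewrite conjCK ffunE swap_halves_lshift.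
under [X in _ * X]eq_bigr => j _ do rewrite ffunE swap_halves_rshift.
by rewrite mulrAC.
Qed.

Lemma tensor_evalZ (w : R[i]) a : (w^*)%R * w = 1 ->
  tensor_eval C (fun k => w * a k) = tensor_eval C a.
Proof.
move=> ww1; apply: eq_bigr => idx _.
rewrite (eq_bigr (fun j => (w^*)%R * (a (idx (lshift g j)))^*)) => [|j _]; last exact: rmorphM.
rewrite !big_split /= !prodr_const !card_ord -!mulrA; congr (_ * _).
by rewrite mulrCA; congr (_ * _); rewrite mulrA -exprMn ww1 expr1n mul1r.
Qed.

End TensorEval.

Section XvecProducts.
Variables (R : realType) (g : nat) (th ph : R).

Lemma xvec0 : xvec th ph ord0 = (cos th)%:C.
Proof. by []. Qed.

Lemma xvec1 : xvec th ph ord_max = (sin th)%:C * cis (- ph).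
Proof. by rewrite /xvec /cis cosN sinN. Qed.

Lemma prod_xvec (s : 'I_g -> 'I_2) :
  \prod_(j < g) xvec th ph (s j) =
  (cos th ^+ (g - nones s) * sin th ^+ nones s)%:C * cis ((nones s)%:R * - ph).
Proof.
by rewrite (prod_ord2 s (xvec th ph)) xvec0 xvec1 exprMn cis_natmul rmorphM !rmorphXn mulrA.
Qed.

Lemma prod_conj_xvec (s : 'I_g -> 'I_2) :
  \prod_(j < g) ((xvec th ph (s j))^*)%R =
  (cos th ^+ (g - nones s) * sin th ^+ nones s)%:C * cis ((nones s)%:R * ph).
Proof.
rewrite (prod_ord2 s (fun k => (xvec th ph k)^*)%R) /= xvec0 xvec1 rmorphM /=.
by rewrite !conj_realC conj_cis opprK exprMn cis_natmul rmorphM !rmorphXn mulrA.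
Qed.

End XvecProducts.

Lemma zspan_Re_tensor_eval_x (R : realType) g (C : tensor R g) : (0 < g)%N ->
  fspan (zvec_products g) (fun p => complex.Re (tensor_eval C (xvec p.1 p.2))).
Proof.
move=> g_gt0.
pose lhalf (idx : {ffun 'I_(g + g) -> 'I_2}) j := idx (lshift g j).
pose rhalf (idx : {ffun 'I_(g + g) -> 'I_2}) j := idx (rshift g j).
apply: (fspan_ext (fspan_sum (index_enum _) (fun idx =>
  zspan_trig_pair g_gt0 (complex.Re (C idx)) (- complex.Im (C idx))
                  (nones_le (lhalf idx)) (nones_le (rhalf idx))))) => pt.
have regroup (z : R[i]) (a b X Y : R) :
    z * (a%:C * cis X) * (b%:C * cis Y) = (a * b)%:C * (z * cis (X + Y)).
  by rewrite rmorphM cisD; ring.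
rewrite /tensor_eval raddf_sum /=; apply: eq_bigr => idx _.
rewrite prod_conj_xvec prod_xvec regroup Re_realC_mul Re_mul_cis mulrN -mulrBl !exprD.
ring.
Qed.

Section QuarterTurn.
Variable R : realType.

Lemma quarter_turn_iter (Q : R -> R) K : (forall x, Q (x + pi / 2) = K - Q x) ->
  forall a x, Q (x + (pi / 2) *+ a) = (-1) ^+ a * Q x + (odd a)%:R * K.
Proof.
move=> QK; elim=> [|a IH] x; first by rewrite mulr0n addr0 expr0 mul1r mul0r addr0.
rewrite mulrSr addrA QK IH exprS /=.
by case: (odd a); rewrite /=; ring.
Qed.

Lemma qform_comb (M : 'M[R]_3) (e u : 'cV[R]_3) (a b : R) :
  qform M (a *: e + b *: u) =
  a ^+ 2 * qform M e + a * b * ((e^T *m M *m u) 0 0 + (u^T *m M *m e) 0 0) +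
  b ^+ 2 * qform M u.
Proof.
rewrite /qform [(_ + _)^T]raddfD /= ![(_ *: _)^T]linearZ /= !mulmxDl !mulmxDr.
rewrite -!scalemxAl -!scalemxAr !mxE.
ring.
Qed.

Lemma qform_quarter_turn (M : 'M[R]_3) (e u : 'cV[R]_3) x :
  qform M (cos (x + pi / 2) *: e + sin (x + pi / 2) *: u) =
  qform M e + qform M u - qform M (cos x *: e + sin x *: u).
Proof. by rewrite !qform_comb cosDpihalf sinDpihalf !cos2sin2 sqrrN; ring. Qed.

Lemma qform_zvec_shift (M : 'M[R]_3) a b th ph :
  qform M (zvec a b (th + pi / 2) ph) =
  (-1) ^+ a * qform M (zvec a b th ph) +
  (odd a)%:R * (qform M (delta_mx 0 0) + qform M (zdir b ph)).
Proof.
rewrite !zvecE mulrDr [a%:R * (pi / 2)]mulr_natl.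
pose Q x := qform M (cos x *: delta_mx 0 0 + sin x *: zdir b ph).
exact: (quarter_turn_iter (Q := Q) (qform_quarter_turn M _ _)).
Qed.

End QuarterTurn.

Lemma yvec_shift (R : realType) (th ph : R) k :
  yvec th ph k = cis ph * xvec (th + pi / 2) ph k.
Proof.
rewrite /yvec /xvec cosDpihalf sinDpihalf; case: ifP => _.
  by rewrite rmorphN mulrC.
have -> : cos ph -i* sin ph = cis (- ph) by rewrite /cis cosN sinN.
by rewrite mulrCA -cisD subrr cis0 mulr1.
Qed.

Lemma tensor_eval_yvec (R : realType) g (C : tensor R g) (th ph : R) :
  tensor_eval C (yvec th ph) = tensor_eval C (xvec (th + pi / 2) ph).
Proof. by rewrite (funext (yvec_shift th ph)); apply: tensor_evalZ; apply: conj_cis_mul. Qed.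

Lemma tensor_eval_yvec_zquad (R : realType) g (C : tensor R g) M (cx : R) :
  (forall th ph, tensor_eval C (xvec th ph) = (zquad_sum g M th ph + cx)%:C) ->
  exists cy : R, forall th ph, tensor_eval C (yvec th ph) =
    (\sum_(1 <= a < g.+1) \sum_(1 <= b < g.+1)
       (-1) ^+ a * qform (M a b) (zvec a b th ph) + cy)%:C.
Proof.
move=> xE.
pose Y th ph := \sum_(1 <= a < g.+1) \sum_(1 <= b < g.+1)
                  (-1) ^+ a * qform (M a b) (zvec a b th ph).
pose K ph := \sum_(1 <= a < g.+1) \sum_(1 <= b < g.+1)
  (odd a)%:R * (qform (M a b) (delta_mx 0 0) + qform (M a b) (zdir b ph)).
have yE th ph : tensor_eval C (yvec th ph) = (Y th ph + K ph + cx)%:C.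
  rewrite tensor_eval_yvec xE /zquad_sum -big_split; congr (_ + _)%:C.
  by apply: eq_bigr => a _; rewrite -big_split; apply: eq_bigr => b _; apply: qform_zvec_shift.
(* At θ = 0 neither y nor the zvec depend on φ. *)
have K_const ph : K ph = K 0.
  have Y_th0 : Y 0 ph = Y 0 0.
    by apply: eq_bigr => a _; apply: eq_bigr => b _; rewrite !zvec_th0.
  have yvec_th0 : yvec 0 ph = yvec 0 0.
    by apply: funext => k; rewrite /yvec sin0 (_ : (0 : R)%:C = 0) // oppr0 !mul0r.
  by move: (yE 0 ph); rewrite yvec_th0 yE Y_th0 => /complexI /addIr /addrI.
by exists (K 0 + cx) => th ph; rewrite yE K_const addrA.
Qed.

Theorem proposition3p1 (R : realType) (g : nat) (C : tensor R g) :
  (1 <= g)%N ->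
  hermitian_tensor C ->
  semisymmetric_tensor C ->
  exists (M : nat -> nat -> 'M[R]_3) (cx cy : R),
    (forall a b : nat, (1 <= a <= g)%N -> (1 <= b <= g)%N -> (M a b)^T = M a b) /\
    (forall th ph : R,
       tensor_eval C (xvec th ph) =
         (\sum_(1 <= a < g.+1) \sum_(1 <= b < g.+1)
             qform (M a b) (zvec a b th ph) + cx)%:C) /\
    (forall th ph : R,
       tensor_eval C (yvec th ph) =
         (\sum_(1 <= a < g.+1) \sum_(1 <= b < g.+1)
             (-1) ^+ a * qform (M a b) (zvec a b th ph) + cy)%:C).
Proof.
move=> g_gt0 hermC _.
have [M [cx [symM ReE]]] := zspan_zquad_sum (zspan_Re_tensor_eval_x C g_gt0).
have xE th ph : tensor_eval C (xvec th ph) = (zquad_sum g M th ph + cx)%:C.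
  by rewrite hermitian_tensor_eval_real // (ReE th ph).
have [cy yE] := tensor_eval_yvec_zquad xE.
by exists M, cx, cy.
Qed.
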